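(* Let $G_k=(V,E,k)$ be a simple digraph with positive edge labels $k\in\mathbb{R}^E_{>0}$ and one (weakly connected) component, with $V=\{1,\dots,m\}$. Let $T=\{1,\dots,t\}\subseteq V_s$ be (the vertex set of) a terminal strong component, and let $\hat q\in\mathbb{R}^{V_s}_{\ge0}$ satisfy $R_k\hat q=0$, $\operatorname{supp}\hat q=T$, and $\hat q_1\ge\cdots\ge\hat q_t>0$. Let $\beta=R_k1_{V_s}\in\mathbb{R}^V$. Then $\sum_{i'=1}^{i}\beta_{i'}\ge0$ for every $i\in T$; if $i<t$ and $\hat q_i>\hat q_{i+1}$, then $\sum_{i'=1}^{i}\beta_{i'}>0$; and $\sum_{i'=1}^{t}\beta_{i'}=0$ if and only if $T=V$.
   Context: $V_s\subseteq V$ is the set of vertices with at least one outgoing edge. The rectangular Laplacian $R_k\in\mathbb{R}^{V\times V_s}$ has entries $(R_k)_{i,j}=k_{j\to i}$ if $(j\to i)\in E$, $(R_k)_{j,j}=-\sum_{(j\to i')\in E}k_{j\to i'}$, and $0$ otherwise. $1_{V_s}$ is the all-ones vector. A terminal strong component is a strongly connected component with no edge leaving it. *)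

From HB Require Import structures.
From mathcomp Require Import all_boot all_order all_algebra.
Set Implicit Arguments. Unset Strict Implicit. Unset Printing Implicit Defensive.
Import Order.TTheory GRing.Theory Num.Theory.
Local Open Scope ring_scope.

(* A digraph on V = 'I_m is a relation E; E j i means the edge j -> i. *)

(* simple digraph: no self-loops (multi-edges are impossible for a relation) *)
Definition simple_digraph (m : nat) (E : rel 'I_m) : Prop := forall i, ~~ E i i.

Definition weakly_connected (m : nat) (E : rel 'I_m) : Prop :=
  forall x y, connect (fun a b => E a b || E b a) x y.

Definition Vs (m : nat) (E : rel 'I_m) : {set 'I_m} := [set j | [exists i, E j i]].

Definition strong_component (m : nat) (E : rel 'I_m) (S : {set 'I_m}) : Prop :=
  exists x, S = [set y | connect E x y && connect E y x].

Definition terminal_strong_component (m : nat) (E : rel 'I_m) (S : {set 'I_m}) : Prop :=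
  strong_component E S /\ (forall x y, x \in S -> E x y -> y \in S).

(* Entry (i, j) of the rectangular Laplacian R_k (only meaningful for j \in V_s);
   k j i is the label k_{j -> i}. *)
Definition Rk_entry (R : ringType) (m : nat) (E : rel 'I_m) (k : 'I_m -> 'I_m -> R)
    (i j : 'I_m) : R :=
  if E j i then k j i
  else if i == j then - \sum_(i' | E j i') k j i'
  else 0.

(* R_k applied to a vector q in R^{V_s} (q is given on all of V; only its
   values on V_s are used). *)
Definition Rk_app (R : ringType) (m : nat) (E : rel 'I_m) (k : 'I_m -> 'I_m -> R)
    (q : 'I_m -> R) (i : 'I_m) : R :=
  \sum_(j in Vs E) Rk_entry E k i j * q j.

Definition beta (R : ringType) (m : nat) (E : rel 'I_m) (k : 'I_m -> 'I_m -> R)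
    (i : 'I_m) : R :=
  Rk_app E k (fun _ => 1) i.

From mathcomp Require Import all_boot all_order all_algebra.
From mathcomp Require Import ring lra.
Set Implicit Arguments. Unset Strict Implicit. Unset Printing Implicit Defensive.
Import Order.TTheory GRing.Theory Num.Theory.
Local Open Scope ring_scope.

(* Summing R_k w over a vertex set P cancels the edges inside P: what remains is
   the flow into P minus the flow out of P, each edge a -> b carrying k_{a->b} w_a.
   Since R_k q = 0, both flows agree for q; for P = {1..i} every edge leaving P has
   tail value >= q_i and every edge entering P has tail value <= q_{i+1} <= q_i, so
   comparing with w = 1 (whose flow difference is the partial sum of beta) gives the
   sign of the partial sum. For P = T nothing leaves, and by weak connectivity
   something enters T unless T = V. *)

Section Flow.
Variables (R : realFieldType) (m : nat) (E : rel 'I_m) (k : 'I_m -> 'I_m -> R).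

Definition edge_label a b : R := if E a b then k a b else 0.

Definition inflow (P : pred 'I_m) (w : 'I_m -> R) : R :=
  \sum_(a | ~~ P a) \sum_(b | P b) edge_label a b * w a.

Definition outflow (P : pred 'I_m) (w : 'I_m -> R) : R :=
  \sum_(a | P a) \sum_(b | ~~ P b) edge_label a b * w a.

Hypothesis simpleE : simple_digraph E.

Lemma Rk_appE w i :
  Rk_app E k w i = \sum_j edge_label j i * w j - w i * \sum_b edge_label i b.
Proof.
have out_sum j : \sum_(b | E j b) k j b = \sum_b edge_label j b.
  by rewrite big_mkcond.
rewrite /Rk_app big_mkcond /= (eq_bigr (fun j => edge_label j i * w j -
  (if i == j then (\sum_b edge_label j b) * w j else 0))); last first.
  move=> j _; case: (boolP (j \in Vs E)) => [_ | notVs].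
  - rewrite /Rk_entry /edge_label -/(edge_label j) -out_sum.
    case: ifP => [Eji | _]; last by case: eqP => _; ring.
    have /negbTE -> : i != j by apply/eqP => ij; move: (simpleE i); rewrite {1}ij Eji.
    by rewrite subr0.
  - have noE b : E j b = false.
      by apply: contraNF notVs => Ejb; rewrite inE; apply/existsP; exists b.
    have -> : \sum_b edge_label j b = 0 by apply: big1 => b _; rewrite /edge_label noE.
    by rewrite /edge_label noE !mul0r; case: eqP; rewrite subrr.
rewrite sumrB [X in _ - X](bigD1 i) //= eqxx [X in _ * _ + X]big1 ?addr0 1?mulrC //.
by move=> j; rewrite eq_sym => /negbTE ->.
Qed.

Lemma sum_Rk_app (P : pred 'I_m) w :
  \sum_(i | P i) Rk_app E k w i = inflow P w - outflow P w.
Proof.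
rewrite (eq_bigr _ (fun i _ => Rk_appE w i)) sumrB.
have -> : \sum_(i | P i) \sum_j edge_label j i * w j =
    \sum_(j | P j) \sum_(i | P i) edge_label j i * w j + inflow P w.
  by rewrite exchange_big (bigID P).
have -> : \sum_(i | P i) w i * \sum_b edge_label i b =
    \sum_(j | P j) \sum_(i | P i) edge_label j i * w j + outflow P w.
  rewrite /outflow -big_split /=; apply: eq_bigr => i _.
  by rewrite mulr_sumr (bigID P) /=; congr (_ + _); apply: eq_bigr => b _; rewrite mulrC.
ring.
Qed.

Lemma sum_beta (P : pred 'I_m) :
  \sum_(i | P i) beta E k i = inflow P (fun _ => 1) - outflow P (fun _ => 1).
Proof. exact: sum_Rk_app. Qed.

Hypothesis k_gt0 : forall j i, E j i -> 0 < k j i.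

Lemma edge_label_ge0 a b : 0 <= edge_label a b.
Proof. by rewrite /edge_label; case: ifP => // /k_gt0 /ltW. Qed.

Lemma inflow_le (P : pred 'I_m) w c :
  (forall a b, ~~ P a -> P b -> E a b -> w a <= c) ->
  inflow P w <= c * inflow P (fun _ => 1).
Proof.
move=> w_le; rewrite /inflow mulr_sumr; apply: ler_sum => a Pa.
rewrite mulr_sumr; apply: ler_sum => b Pb; rewrite mulr1 (mulrC c).
case Eab: (E a b); last by rewrite /edge_label Eab !mul0r.
by apply: ler_wpM2l; [exact: edge_label_ge0 | exact: w_le Pa Pb Eab].
Qed.

Lemma outflow_ge (P : pred 'I_m) w c :
  (forall a b, P a -> ~~ P b -> E a b -> c <= w a) ->
  c * outflow P (fun _ => 1) <= outflow P w.
Proof.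
move=> w_ge; rewrite /outflow mulr_sumr; apply: ler_sum => a Pa.
rewrite mulr_sumr; apply: ler_sum => b Pb; rewrite mulr1 (mulrC c).
case Eab: (E a b); last by rewrite /edge_label Eab !mul0r.
by apply: ler_wpM2l; [exact: edge_label_ge0 | exact: w_ge Pa Pb Eab].
Qed.

Lemma inflow1_gt0 (P : pred 'I_m) a b :
  ~~ P a -> P b -> E a b -> 0 < inflow P (fun _ => 1).
Proof.
move=> Pa Pb Eab; rewrite /inflow (bigD1 a) //= (bigD1 b) //=.
have ab_gt0 : 0 < edge_label a b * 1 by rewrite mulr1 /edge_label Eab k_gt0.
have rest_b : 0 <= \sum_(i | P i && (i != b)) edge_label a i * 1.
  by apply: sumr_ge0 => i _; rewrite mulr1 edge_label_ge0.
have rest_a : 0 <= \sum_(i | ~~ P i && (i != a)) \sum_(j | P j) edge_label i j * 1.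
  by apply: sumr_ge0 => i _; apply: sumr_ge0 => j _; rewrite mulr1 edge_label_ge0.
lra.
Qed.

Lemma outflow_eq0 (P : pred 'I_m) w :
  (forall a b, P a -> E a b -> P b) -> outflow P w = 0.
Proof.
move=> closedP; apply: big1 => a Pa; apply: big1 => b Pb.
rewrite /edge_label; case Eab: (E a b); last by rewrite mul0r.
by have := closedP a b Pa Eab; rewrite (negbTE Pb).
Qed.

Lemma cut_balance (P : pred 'I_m) q c_in c_out :
  (forall i, Rk_app E k q i = 0) ->
  (forall a b, ~~ P a -> P b -> E a b -> q a <= c_in) ->
  (forall a b, P a -> ~~ P b -> E a b -> c_out <= q a) ->
  c_out * outflow P (fun _ => 1) <= c_in * inflow P (fun _ => 1).
Proof.
move=> Rq q_in q_out; apply: le_trans (outflow_ge q_out) _.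
have -> : outflow P q = inflow P q.
  by apply/eqP; rewrite eq_sym -subr_eq0 -sum_Rk_app big1.
exact: inflow_le.
Qed.

End Flow.

Lemma connect_cross (T : finType) (r : rel T) (P : pred T) x y :
  connect r x y -> ~~ P x -> P y -> exists a b, [/\ ~~ P a, P b & r a b].
Proof.
move=> /connectP [p]; elim: p x => [|z p IH] x /=.
  by move=> _ -> Px Py; rewrite Py in Px.
move=> /andP [rxz pz] ey Px Py.
case Pz: (P z); first by exists x, z.
by apply: IH pz ey _ Py; rewrite Pz.
Qed.

Section TerminalComponent.
Variables (R : realFieldType) (m t : nat) (E : rel 'I_m).
Variables (k : 'I_m -> 'I_m -> R) (q : 'I_m -> R).

Hypothesis simpleE : simple_digraph E.
Hypothesis k_gt0 : forall j i, E j i -> 0 < k j i.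
Hypothesis T_terminal : terminal_strong_component E [set i : 'I_m | (i < t)%N].
Hypothesis Rq : forall i, Rk_app E k q i = 0.
Hypothesis q_supp : forall j, j \in Vs E -> (q j != 0) = (j < t)%N.
Hypothesis q_antitone : forall i j : 'I_m, (i <= j)%N -> (j < t)%N -> q j <= q i.
Hypothesis q_pos : forall i : 'I_m, (i < t)%N -> 0 < q i.

Let prefix (i : 'I_m) : pred 'I_m := fun a => (a <= i)%N.

Lemma T_closed (a b : 'I_m) : (a < t)%N -> E a b -> (b < t)%N.
Proof. by case: T_terminal => _ closedT aT Eab; have := closedT a b; rewrite !inE; apply. Qed.

Lemma T_strongly_connected (a b : 'I_m) : (a < t)%N -> (b < t)%N -> connect E a b.
Proof.
case: T_terminal => -[x defT] _ aT bT.
have : a \in [set i : 'I_m | (i < t)%N] by rewrite inE.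
have : b \in [set i : 'I_m | (i < t)%N] by rewrite inE.
rewrite defT !inE => /andP [xb _] /andP [_ ax]; exact: connect_trans ax xb.
Qed.

Lemma q_tail_le (j a b : 'I_m) : (j <= a)%N -> (j < t)%N -> E a b -> q a <= q j.
Proof.
move=> ja jt Eab; case: (ltnP a t) => [aT | ta]; first exact: q_antitone.
have aVs : a \in Vs E by rewrite inE; apply/existsP; exists b.
have /eqP -> : q a == 0 by apply: contraTT ta; rewrite q_supp // -ltnNge.
exact/ltW/q_pos.
Qed.

Lemma prefix_cut_balance (i : 'I_m) (j : 'I_m) : (i < t)%N -> (j <= i.+1)%N -> (j < t)%N ->
  q i * outflow E k (prefix i) (fun _ => 1) <= q j * inflow E k (prefix i) (fun _ => 1).
Proof.
move=> it ji jt; apply: cut_balance => // a b.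
- by move=> ai _; apply: q_tail_le => //; apply: leq_trans ji _; rewrite ltnNge.
- by move=> ai _ _; apply: q_antitone => //; apply: leq_ltn_trans it.
Qed.

Lemma prefix_sum_beta_ge0 (i : 'I_m) : (i < t)%N -> 0 <= \sum_(a | prefix i a) beta E k a.
Proof.
move=> it; rewrite sum_beta // subr_ge0 -(ler_pM2l (q_pos it)).
exact: prefix_cut_balance.
Qed.

Lemma prefix_sum_beta_gt0 (i j : 'I_m) :
  nat_of_ord j = i.+1 -> (j < t)%N -> q j < q i -> 0 < \sum_(a | prefix i a) beta E k a.
Proof.
move=> ji jt qji; have it : (i < t)%N by apply: ltn_trans jt; rewrite ji.
have [a [b [ai bi Eab]]] : exists a b, [/\ ~~ prefix i a, prefix i b & E a b].
  by apply: (connect_cross (T_strongly_connected jt it)); rewrite /prefix ?ji ?ltnn.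
rewrite sum_beta // subr_gt0 -(ltr_pM2l (q_pos it)).
apply: le_lt_trans (prefix_cut_balance it _ jt) _; first by rewrite ji.
by rewrite ltr_pM2r // (inflow1_gt0 k_gt0 ai bi Eab).
Qed.

Lemma sum_beta_T :
  \sum_(a < m | (a < t)%N) beta E k a = inflow E k (fun a : 'I_m => (a < t)%N) (fun _ => 1).
Proof. by rewrite sum_beta // outflow_eq0 ?subr0 //; apply: T_closed. Qed.

End TerminalComponent.

Theorem lemma14 (R : realFieldType) (m t : nat) (E : rel 'I_m)
  (k : 'I_m -> 'I_m -> R) (q : 'I_m -> R) :
  simple_digraph E ->
  (forall j i, E j i -> 0 < k j i) ->
  weakly_connected E ->
  (0 < t)%N -> (t <= m)%N ->
  [set i : 'I_m | (i < t)%N] \subset Vs E ->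
  terminal_strong_component E [set i : 'I_m | (i < t)%N] ->
  (forall j, j \in Vs E -> 0 <= q j) ->
  (forall i, Rk_app E k q i = 0) ->
  (forall j, j \in Vs E -> (q j != 0) = (j < t)%N) ->
  (forall i j : 'I_m, (i <= j)%N -> (j < t)%N -> q j <= q i) ->
  (forall i : 'I_m, (i < t)%N -> 0 < q i) ->
  [/\ (forall i : 'I_m, (i < t)%N -> 0 <= \sum_(i' < m | (i' <= i)%N) beta E k i'),
      (forall i j : 'I_m, nat_of_ord j = i.+1 -> (j < t)%N -> q j < q i ->
          0 < \sum_(i' < m | (i' <= i)%N) beta E k i')
    & ((\sum_(i' < m | (i' < t)%N) beta E k i' == 0) <-> t = m)].
Proof.
move=> simpleE k_gt0 connE t_gt0 tm _ T_terminal _ Rq q_supp q_antitone q_pos.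
split.
- by move=> i; apply: prefix_sum_beta_ge0.
- by move=> i j; apply: prefix_sum_beta_gt0.
rewrite sum_beta_T //; split=> [/eqP in0 | tm']; last first.
  by subst t; apply/eqP/big1 => a; rewrite ltn_ord.
apply/eqP; rewrite eqn_leq tm leqNgt; apply/negP => t_lt_m.
have [a [b [aT bT /orP [Eab | Eba]]]] := connect_cross (P := fun a : 'I_m => (a < t)%N)
  (connE (Ordinal t_lt_m) (Ordinal (leq_trans t_gt0 tm))) (negbT (ltnn t)) t_gt0.
- suff : 0 < inflow E k (fun a : 'I_m => (a < t)%N) (fun _ => 1) by rewrite in0 ltxx.
  exact: (inflow1_gt0 (P := fun a : 'I_m => (a < t)%N) k_gt0 aT bT Eab).
- by move: aT; rewrite /= (T_closed T_terminal bT Eba).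
Qed.
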